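(* Let $M$ and $N$ be positive integers. For an integer $N_{\rm in}$, put $N_{\rm ou}=N-N_{\rm in}$. Call $N_{\rm in}$ feasible if it forms a (genuine) two-level nested array, i.e. $N_{\rm in}\ge 1$ and $N_{\rm ou}\ge 2$ (equivalently $N_{\rm in}\in\{1,2,\dots,N-2\}$), and it satisfies the dimension constraint $$N_{\rm ou}(N_{\rm in}+1)d-d\le (M-1)d,$$ where $d>0$. Define $$N_{\rm in}^l=\left\lfloor \frac{(N-1)-\sqrt{(N+1)^2-4M}}{2}\right\rfloor,\qquad N_{\rm in}^u=\left\lceil \frac{(N-1)+\sqrt{(N+1)^2-4M}}{2}\right\rceil .$$ Then the set $\mathcal S_{\rm NA}$ of feasible $N_{\rm in}$ is: (i) $\mathcal S_{\rm NA}=\{1,2,\dots,N-2\}$ if $\frac{(N+1)^2}{4}\le M$; (ii) $\mathcal S_{\rm NA}=\{1,\dots,N_{\rm in}^l\}\cup\{N_{\rm in}^u,\dots,N-2\}$ if $\frac{(N+1)^2}{4}> M$ and $N_{\rm in}^l\ge 1$.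
   Context: Setting: a uniform linear array of $M$ antenna pixels with adjacent spacing $d$ (physical dimension $(M-1)d$), from which $N$ pixels are activated to form a two-level nested array: an inner compact array of $N_{\rm in}$ pixels with spacing $d$, followed by an outer uniform array of $N_{\rm ou}=N-N_{\rm in}$ pixels with spacing $(N_{\rm in}+1)d$, the last inner pixel and first outer pixel being separated by $d$. Its physical dimension is $N_{\rm ou}(N_{\rm in}+1)d-d$, which must not exceed that of the original array. The cases $N_{\rm in}=0$ or $N_{\rm ou}\in\{0,1\}$ are excluded since the array then reduces to a compact array. *)

From Stdlib Require Import Reals ZArith.
Open Scope R_scope.

(* floor and ceiling on R.  Int_part r = up r - 1 is the floor of r. *)
Definition Zfloor (x : R) : Z := Int_part x.
Definition Zceil (x : R) : Z := (- Int_part (- x))%Z.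

Definition feasible (M N : nat) (d : R) (Nin : Z) : Prop :=
  let Nou := (Z.of_nat N - Nin)%Z in
  (1 <= Nin)%Z /\ (2 <= Nou)%Z /\
  IZR Nou * (IZR Nin + 1) * d - d <= (INR M - 1) * d.

Definition Nin_l (M N : nat) : Z :=
  Zfloor (((INR N - 1) - sqrt ((INR N + 1) ^ 2 - 4 * INR M)) / 2).
Definition Nin_u (M N : nat) : Z :=
  Zceil (((INR N - 1) + sqrt ((INR N + 1) ^ 2 - 4 * INR M)) / 2).

(** The dimension constraint, divided by [d > 0], says that the quadratic
    [q(y) = y^2 - (N-1) y + (M - N)] is nonnegative at [y = N_in]; its
    discriminant is [(N+1)^2 - 4M].  If that is nonpositive the constraint is
    void; otherwise [q(y) >= 0] exactly outside the open interval between its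
    roots, and rounding the lower root down and the upper root up gives
    [N_in^l] and [N_in^u].  Since the roots sum to [N-1], the condition
    [N_in^l >= 1] makes the two resulting ranges fit inside [1 .. N-2]. *)

From Stdlib Require Import Reals ZArith Lra Lia Psatz.
Open Scope R_scope.

Lemma le_Zfloor_iff (x : Z) (r : R) : (x <= Zfloor r)%Z <-> IZR x <= r.
Proof.
  change (Zfloor r) with (Int_part r); destruct (base_Int_part r) as [Hle Hgt]; split; intro H.
  - pose proof (IZR_le _ _ H); lra.
  - assert (Hlt : IZR x < IZR (Int_part r + 1)) by (rewrite plus_IZR; lra).
    apply lt_IZR in Hlt; lia.
Qed.

Lemma Zceil_le_iff (x : Z) (r : R) : (Zceil r <= x)%Z <-> r <= IZR x.
Proof.
  unfold Zceil; change (Int_part (- r)) with (Zfloor (- r)).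
  transitivity (- x <= Zfloor (- r))%Z; [lia |].
  rewrite le_Zfloor_iff, opp_IZR; split; intro; lra.
Qed.

Lemma monic_quadratic_nonneg (b c y : R) :
  b ^ 2 - 4 * c <= 0 -> 0 <= y * y - b * y + c.
Proof. intro Hdisc; pose proof (pow2_ge_0 (2 * y - b)); nra. Qed.

Lemma monic_quadratic_factor (b c y : R) :
  0 <= b ^ 2 - 4 * c ->
  y * y - b * y + c =
  (y - (b - sqrt (b ^ 2 - 4 * c)) / 2) * (y - (b + sqrt (b ^ 2 - 4 * c)) / 2).
Proof.
  intro Hdisc; pose proof (sqrt_sqrt _ Hdisc) as Hsq; nra.
Qed.

Lemma monic_quadratic_nonneg_iff (b c y : R) :
  0 <= b ^ 2 - 4 * c ->
  0 <= y * y - b * y + c <->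
  y <= (b - sqrt (b ^ 2 - 4 * c)) / 2 \/ (b + sqrt (b ^ 2 - 4 * c)) / 2 <= y.
Proof.
  intro Hdisc; rewrite (monic_quadratic_factor b c y Hdisc).
  pose proof (sqrt_pos (b ^ 2 - 4 * c)).
  set (lo := (b - sqrt (b ^ 2 - 4 * c)) / 2).
  set (hi := (b + sqrt (b ^ 2 - 4 * c)) / 2).
  assert (lo <= hi) by (unfold lo, hi; lra).
  split.
  - intro Hprod; destruct (Rle_dec y lo) as [|Hlo]; [now left | right].
    destruct (Rle_dec hi y) as [|Hhi]; [assumption | exfalso].
    assert (0 < (y - lo) * (hi - y)) by (apply Rmult_lt_0_compat; lra); lra.
  - intros [Hy | Hy]; nra.
Qed.

Lemma nested_discriminant (M N : nat) :
  (INR N - 1) ^ 2 - 4 * (INR M - INR N) = (INR N + 1) ^ 2 - 4 * INR M.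
Proof. ring. Qed.

Lemma feasible_iff_quadratic (M N : nat) (d : R) (Nin : Z) : 0 < d ->
  feasible M N d Nin <->
  (1 <= Nin <= Z.of_nat N - 2)%Z /\
  0 <= IZR Nin * IZR Nin - (INR N - 1) * IZR Nin + (INR M - INR N).
Proof.
  intro Hd; unfold feasible; rewrite minus_IZR, <- INR_IZR_INZ.
  assert (Hdim : forall a b, a * d - d <= (b - 1) * d <-> a <= b).
  { intros a b; split; intro H.
    - apply (Rmult_le_reg_r d); lra.
    - assert (a * d <= b * d) by (apply Rmult_le_compat_r; lra); lra. }
  rewrite Hdim; split.
  - intros (H1 & H2 & H3); repeat split; [lia | lia | nra].
  - intros ((H1 & H2) & H3); repeat split; [lia | lia | nra].
Qed.

Lemma le_Nin_l_iff (M N : nat) (x : Z) :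
  (x <= Nin_l M N)%Z <->
  IZR x <= ((INR N - 1) - sqrt ((INR N + 1) ^ 2 - 4 * INR M)) / 2.
Proof. apply le_Zfloor_iff. Qed.

Lemma Nin_u_le_iff (M N : nat) (x : Z) :
  (Nin_u M N <= x)%Z <->
  ((INR N - 1) + sqrt ((INR N + 1) ^ 2 - 4 * INR M)) / 2 <= IZR x.
Proof. apply Zceil_le_iff. Qed.

Lemma Nin_l_double_le (M N : nat) : (2 * Nin_l M N <= Z.of_nat N - 1)%Z.
Proof.
  assert (Hl := Z.le_refl (Nin_l M N)); rewrite le_Nin_l_iff in Hl.
  pose proof (sqrt_pos ((INR N + 1) ^ 2 - 4 * INR M)).
  apply le_IZR; rewrite mult_IZR, minus_IZR, <- INR_IZR_INZ; lra.
Qed.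

Lemma Nin_l_le_Nin_u (M N : nat) : (Nin_l M N <= Nin_u M N)%Z.
Proof.
  assert (Hl := Z.le_refl (Nin_l M N)); rewrite le_Nin_l_iff in Hl.
  assert (Hu := Z.le_refl (Nin_u M N)); rewrite Nin_u_le_iff in Hu.
  pose proof (sqrt_pos ((INR N + 1) ^ 2 - 4 * INR M)).
  apply le_IZR; lra.
Qed.

Theorem proposition1 (M N : nat) (d : R) :
  (0 < M)%nat -> (0 < N)%nat -> 0 < d ->
  ((INR N + 1) ^ 2 / 4 <= INR M ->
     forall Nin : Z, feasible M N d Nin <->
       (1 <= Nin /\ Nin <= Z.of_nat N - 2)%Z) /\
  ((INR N + 1) ^ 2 / 4 > INR M -> (1 <= Nin_l M N)%Z ->
     forall Nin : Z, feasible M N d Nin <->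
       ((1 <= Nin /\ Nin <= Nin_l M N) \/
        (Nin_u M N <= Nin /\ Nin <= Z.of_nat N - 2))%Z).
Proof.
  intros _ _ Hd; split.
  - intros Hdisc Nin; rewrite feasible_iff_quadratic by exact Hd.
    pose proof (monic_quadratic_nonneg (INR N - 1) (INR M - INR N) (IZR Nin)).
    rewrite nested_discriminant in *; intuition lra.
  - intros Hdisc Hl Nin; rewrite feasible_iff_quadratic by exact Hd.
    rewrite monic_quadratic_nonneg_iff by (rewrite nested_discriminant; lra).
    rewrite nested_discriminant, <- le_Nin_l_iff, <- Nin_u_le_iff.
    pose proof (Nin_l_double_le M N); pose proof (Nin_l_le_Nin_u M N); lia.
Qed.
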